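(* Let $S$ and $T$ be totally ordered sets, $x\in S$, $y\in T$, and let $Q$ be one of the subposets of $S\times T$ (product order) $$(x,y)^{\rightleftarrows}=\big(\{x\}\times\{t\in T:t\le y\}\big)\cup\big(\{s\in S:s\le x\}\times\{y\}\big),\qquad (x,y)^{\leftrightarrows}=\big(\{x\}\times\{t\in T:t\ge y\}\big)\cup\big(\{s\in S:s\ge x\}\times\{y\}\big).$$ If $M\colon Q\to\mathbf{Vec}$ is pointwise finite-dimensional and indecomposable, then $M\cong k_I$ for some interval $I\subseteq Q$.
   Context: Persistence modules over a poset are functors to $k$-vector spaces. An interval in $Q$ is a non-empty subset that is convex ($p\le q\le r$ with $p,r$ in it implies $q$ in it) and connected (any two elements are joined by a finite sequence of elements of the subset with consecutive elements comparable). $k_I$ is $k$ at points of $I$, $0$ elsewhere, with identity maps between points of $I$ and zero maps otherwise. *)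

(* Persistence modules over a poset, pointwise finite-dimensional
   (values in finite-dimensional F-vector spaces, i.e. vectType F). *)
From HB Require Import structures.
From mathcomp Require Import all_boot all_order all_algebra.
Set Implicit Arguments. Unset Strict Implicit. Unset Printing Implicit Defensive.
Import Order.TTheory GRing.Theory Num.Theory.
Local Open Scope ring_scope.

Section PMod.
Variables (F : fieldType) (P : Type) (le : rel P).

Definition is_pmod (M : P -> vectType F)
  (f : forall p q, le p q -> 'Hom(M p, M q)) : Prop :=
  (forall p (h : le p p) (v : M p), f p p h v = v) /\
  (forall p q r (h1 : le p q) (h2 : le q r) (h3 : le p r) (v : M p),
      f p r h3 v = f q r h2 (f p q h1 v)).

Definition indecomposable (M : P -> vectType F)
  (f : forall p q, le p q -> 'Hom(M p, M q)) : Prop :=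
  (exists p (v : M p), v != 0) /\
  forall U V : forall p, {vspace M p},
    (forall p q (h : le p q), (f p q h @: U p <= U q)%VS) ->
    (forall p q (h : le p q), (f p q h @: V p <= V q)%VS) ->
    (forall p, (U p + V p)%VS = fullv) ->
    (forall p, (U p :&: V p)%VS = 0%VS) ->
    (forall p, U p = 0%VS) \/ (forall p, V p = 0%VS).

Definition pmod_iso (M : P -> vectType F)
  (f : forall p q, le p q -> 'Hom(M p, M q))
  (N : P -> vectType F) (g : forall p q, le p q -> 'Hom(N p, N q)) : Prop :=
  exists (phi : forall p, 'Hom(M p, N p)) (psi : forall p, 'Hom(N p, M p)),
    [/\ forall p q (h : le p q) (v : M p), phi q (f p q h v) = g p q h (phi p v),
        forall p (v : M p), psi p (phi p v) = v &
        forall p (w : N p), phi p (psi p w) = w].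

Definition is_interval (I : pred P) : Prop :=
  [/\ exists p, I p,
      forall p q r, le p q -> le q r -> I p -> I r -> I q &
      forall p q, I p -> I q ->
        exists s : seq P, [/\ all I s, path (fun a b => le a b || le b a) p s
                              & last p s = q]].

(* The interval module k_I: k (= 'rV_1) on I, 0 (= 'rV_0) elsewhere;
   identity between points of I, zero maps otherwise. *)
Definition kI_obj (I : pred P) (p : P) : vectType F := 'rV[F]_(I p : nat).

Definition kI_map (I : pred P) (p q : P) (_ : le p q) :
  'Hom(kI_obj I p, kI_obj I q) :=
  linfun (fun v : 'rV[F]_(I p : nat) =>
            (\row_(j < (I q : nat)) \sum_(i < (I p : nat)) v 0 i) : 'rV[F]_(I q : nat)).

End PMod.

(* The two subposets of S x T. dir = true : (x,y)^{rightleftarrows}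
   = {x} x (<= y)  U  (<= x) x {y};  dir = false : (x,y)^{leftrightarrows}
   = {x} x (>= y)  U  (>= x) x {y}. *)
Definition Qset (dS dT : Order.disp_t) (S : orderType dS) (T : orderType dT)
  (dir : bool) (x : S) (y : T) : pred (S * T) :=
  fun st => if dir then ((st.1 == x) && (st.2 <= y)%O) || ((st.1 <= x)%O && (st.2 == y))
            else ((st.1 == x) && (y <= st.2)%O) || ((x <= st.1)%O && (st.2 == y)).

Definition Qty (dS dT : Order.disp_t) (S : orderType dS) (T : orderType dT)
  (dir : bool) (x : S) (y : T) : Type := {st : S * T | Qset dir x y st}.

Definition Qle (dS dT : Order.disp_t) (S : orderType dS) (T : orderType dT)
  (dir : bool) (x : S) (y : T) : rel (Qty dir x y) :=
  fun a b => ((sval a).1 <= (sval b).1)%O && ((sval a).2 <= (sval b).2)%O.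
Arguments Qle {dS dT S T} dir x y.
Arguments kI_obj F {P} I p.
Arguments kI_map F {P le} I p q _.

From HB Require Import structures.
From mathcomp Require Import all_boot all_order all_algebra.
From mathcomp Require Import boolp zify.
From mathcomp Require classical_sets.
Set Implicit Arguments. Unset Strict Implicit. Unset Printing Implicit Defensive.
Import Order.TTheory GRing.Theory.
Local Open Scope ring_scope.

(* Q consists of two chains, the arms, meeting at the corner (x, y), which is
   the maximum (resp. minimum) of Q.  We split off an interval summand, in the
   spirit of functorial filtrations.  Choose p with M p != 0, namely the corner
   unless M vanishes there.  The images f_tp(M t) and the kernels of the maps
   f_ps form at most two chains of subspaces of M p, so there are w != 0 and a
   complement Y of <[w]> in M p containing each of them that avoids w
   (good_vector).  A Mittag-Leffler argument along chains (compatible_section: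
   Zorn's lemma on compatible families of affine subspaces, using finite
   dimension) gives coherent preimages of w below p and coherent functionals
   above p which are 1 on w and 0 on Y, first along each arm and then glued
   (glue_families).  The lines through these vectors form a submodule with an
   explicit complement (section Splitting); indecomposability kills the
   complement, so M is isomorphic to k_I for I the support of the submodule,
   which is an interval. *)

Lemma ex_minn_Prop (P : nat -> Prop) :
  (exists n, P n) -> exists n, P n /\ forall m, P m -> (n <= m)%N.
Proof.
move=> [n Pn]; have exP : exists n, `[< P n >] by exists n; apply/asboolP.
case: (ex_minnP exP) => m /asboolP Pm minm; exists m; split=> // k Pk.
by apply: minm; apply/asboolP.
Qed.

(* We consider families of affine subspaces  a j + W j  of the fibres of c that
   are stable under the transition maps, take a minimal one by Zorn's lemma
   (finite dimension gives chains a lower bound), and show that minimality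
   forces every W j to be 0. *)
Section MittagLeffler.
Variables (F : fieldType) (J : Type) (r : rel J).
Hypothesis r_trans : forall i j k, r i j -> r j k -> r i k.
Hypothesis r_total : total r.
Variables (E : J -> vectType F) (Z : vectType F) (h : forall j, 'Hom(E j, Z)).
Variable g : forall i j, 'Hom(E i, E j).
Hypothesis g_comp : forall i j k, r i j -> r j k -> forall v, g i k v = g j k (g i j v).
Hypothesis h_g : forall i j, r i j -> forall v, h j (g i j v) = h i v.
Variable c : Z.
Hypothesis fibre_nonempty : forall j, exists v, h j v = c.

Lemma r_refl j : r j j. Proof. by have := r_total j j; rewrite orbb. Qed.

(* A family of affine subspaces  apt j + adir j  of the spaces E j. *)
Record affam := AffFam { apt : forall j, E j; adir : forall j, {vspace E j} }.

Definition admissible (B : affam) : Prop :=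
  [/\ forall j, h j (apt B j) = c,
      forall j, (adir B j <= lker (h j))%VS,
      forall i j, r i j -> g i j (apt B i) - apt B j \in adir B j &
      forall i j, r i j -> (g i j @: adir B i <= adir B j)%VS].

Definition refines_at (B' B : affam) j :=
  (apt B' j - apt B j \in adir B j) && (adir B' j <= adir B j)%VS.
Definition refines (B' B : affam) : Prop := forall j, refines_at B' B j.

Lemma refines_at_refl B j : refines_at B B j.
Proof. by rewrite /refines_at subrr mem0v subvv. Qed.

Lemma refines_at_trans B1 B2 B3 j :
  refines_at B1 B2 j -> refines_at B2 B3 j -> refines_at B1 B3 j.
Proof.
move=> /andP[a12 W12] /andP[a23 W23]; apply/andP; split; last exact: subv_trans W23.
have -> : apt B1 j - apt B3 j = (apt B1 j - apt B2 j) + (apt B2 j - apt B3 j).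
  by rewrite addrA subrK.
by rewrite memvD // (subvP W23).
Qed.

Lemma fibres_admissible : exists B, admissible B.
Proof.
pose a j := sval (cid (fibre_nonempty j)).
have ha j : h j (a j) = c by rewrite /a; case: (cid _).
exists (AffFam a (fun j => lker (h j))); split=> //=.
- by move=> i j rij; rewrite memv_ker raddfB /= h_g // !ha subrr.
- move=> i j rij; apply/subvP => _ /memv_imgP[v + ->].
  by rewrite !memv_ker h_g.
Qed.

Lemma refines_at_min_dim (B1 B2 : affam) j :
  refines B1 B2 \/ refines B2 B1 -> (\dim (adir B1 j) <= \dim (adir B2 j))%N ->
  refines_at B1 B2 j.
Proof.
case=> [/(_ j) //|/(_ j) /andP[a21 W21] dim12].
have eqW : adir B2 j = adir B1 j by apply/eqP; rewrite eqEdim W21.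
by rewrite /refines_at eqW -opprB rpredN a21 subvv.
Qed.

(* A non-empty chain of admissible families has an admissible lower bound, made
   at each index of a member of least dimension there. *)
Lemma chain_lower_bound (A : affam -> Prop) B0 :
  A B0 -> (forall B, A B -> admissible B) ->
  (forall B1 B2, A B1 -> A B2 -> refines B1 B2 \/ refines B2 B1) ->
  exists C, admissible C /\ forall B, A B -> refines C B.
Proof.
move=> AB0 A_adm A_chain.
have least j : exists Bj, A Bj /\ forall B, A B -> (\dim (adir Bj j) <= \dim (adir B j))%N.
  have [n [[Bn [ABn <-]] minn]] := ex_minn_Prop
    (ex_intro (fun n => exists B, A B /\ \dim (adir B j) = n) _ (ex_intro _ B0 (conj AB0 erefl))).
  by exists Bn; split=> // B AB; apply: minn; exists B.
have [sel selP] := boolp.choice least.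
pose C := AffFam (fun j => apt (sel j) j) (fun j => adir (sel j) j).
have C_below B j : A B -> refines_at C B j.
  by move=> AB; have [As mins] := selP j; exact: refines_at_min_dim (A_chain _ _ As AB) (mins _ AB).
exists C; split=> [|B AB j]; last exact: C_below.
split=> [j|j|i j rij|i j rij] /=; first by have [/A_adm[]] := selP j.
- by have [/A_adm[]] := selP j.
- have [ASj _] := selP j; have [_ _ ptj dj] := A_adm _ ASj.
  have /andP[dij _] := C_below _ i ASj.
  have -> : g i j (apt (sel i) i) - apt (sel j) j =
      g i j (apt (sel i) i - apt (sel j) i) + (g i j (apt (sel j) i) - apt (sel j) j).
    by rewrite raddfB /= addrA subrK.
  by rewrite memvD ?ptj // (subvP (dj _ _ rij)) ?memv_img.
- have [ASj _] := selP j; have [_ _ _ dj] := A_adm _ ASj.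
  have /andP[_ Wij] := C_below _ i ASj.
  exact: subv_trans (limgS _ Wij) (dj _ _ rij).
Qed.

Lemma minimal_admissible : exists B, admissible B /\
  forall B', admissible B' -> refines B' B -> refines B B'.
Proof.
have [B0 adm0] := fibres_admissible.
pose T := {B | admissible B}.
pose R (s t : T) := `[< refines (sval t) (sval s) >].
have [t t_max] : exists t, classical_sets.premaximal R t.
  apply: (classical_sets.ZL_preorder (exist _ B0 adm0)).
  - by move=> s; apply/asboolP => j; exact: refines_at_refl.
  - move=> a b d /asboolP ab /asboolP bd; apply/asboolP => j.
    exact: refines_at_trans (bd j) (ab j).
  move=> A A_chain.
  have [[s As]|noA] := pselect (exists s, A s); last first.
    by exists (exist _ B0 adm0) => s As; case: noA; exists s.
  pose A' B := exists2 s : T, A s & sval s = B.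
  have A'_adm B : A' B -> admissible B by case=> s' _ <-; exact: svalP.
  have A'_chain B1 B2 : A' B1 -> A' B2 -> refines B1 B2 \/ refines B2 B1.
    by case=> s1 As1 <- [s2 As2 <-]; case: (A_chain _ _ As1 As2) => /asboolP; by [right|left].
  have [C [admC C_below]] := chain_lower_bound (ex_intro2 _ _ s As erefl) A'_adm A'_chain.
  by exists (exist _ C admC) => s' As'; apply/asboolP; apply: C_below; exists s'.
exists (sval t); split=> [|B' admB' refB']; first exact: svalP.
by have /asboolP := t_max (exist _ B' admB') (asboolT refB').
Qed.

Section MinimalFamily.
Variable B : affam.
Hypothesis B_adm : admissible B.
Hypothesis B_min : forall B', admissible B' -> refines B' B -> refines B B'.

Definition push_forward i0 : affam :=
  AffFam (fun j => if r i0 j then g i0 j (apt B i0) else apt B j)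
         (fun j => if r i0 j then (g i0 j @: adir B i0)%VS else adir B j).

Lemma push_forward_admissible i0 : admissible (push_forward i0).
Proof.
have [fib dirker ptc dirc] := B_adm.
split=> [k|k|i k rik|i k rik] /=.
- by case: ifP => // rk; rewrite h_g // fib.
- case: ifP => // rk; apply/subvP => _ /memv_imgP[x Hx ->].
  by rewrite memv_ker h_g //; move/(subvP (dirker i0)): Hx; rewrite memv_ker.
- case: ifP => ri; case: ifP => rk.
  + by rewrite -g_comp // subrr mem0v.
  + by rewrite (r_trans ri rik) in rk.
  + have ri' : r i i0 by have := r_total i0 i; rewrite ri.
    by rewrite (g_comp ri' rk) -raddfB; apply: memv_img; exact: ptc.
  + exact: ptc.
- case: ifP => ri; case: ifP => rk.
  + apply/subvP => _ /memv_imgP[x /memv_imgP[y Hy ->] ->].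
    by rewrite -g_comp //; exact: memv_img.
  + by rewrite (r_trans ri rik) in rk.
  + have ri' : r i i0 by have := r_total i0 i; rewrite ri.
    apply/subvP => _ /memv_imgP[x Hx ->].
    rewrite (g_comp ri' rk); apply: memv_img; apply: (subvP (dirc _ _ ri')).
    exact: memv_img.
  + exact: dirc.
Qed.

Lemma push_forward_refines i0 : refines (push_forward i0) B.
Proof.
have [_ _ ptc dirc] := B_adm.
move=> k; rewrite /refines_at /=; case: ifP => rk; last exact: refines_at_refl.
by rewrite ptc // dirc.
Qed.

Lemma minimal_onto i0 j : r i0 j -> forall v, v - apt B j \in adir B j ->
  exists2 u, u - apt B i0 \in adir B i0 & g i0 j u = v.
Proof.
move=> ri0j v vB.
have := B_min (push_forward_admissible i0) (push_forward_refines i0) j.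
rewrite /refines_at /= ri0j => /andP[pt_in dir_sub].
have : v - g i0 j (apt B i0) \in (g i0 j @: adir B i0)%VS.
  have -> : v - g i0 j (apt B i0) = (v - apt B j) + (apt B j - g i0 j (apt B i0)).
    by rewrite addrA subrK.
  by rewrite memvD // (subvP dir_sub).
case/memv_imgP => u uB vE; exists (apt B i0 + u); first by rewrite addrC addKr.
by rewrite raddfD /= -vE addrC subrK.
Qed.

Section Shrink.
Variable j0 : J.

Lemma below_preimage j : exists u, ~~ r j0 j ->
  u - apt B j \in adir B j /\ g j j0 u = apt B j0.
Proof.
have [rj|rj] := boolP (r j0 j); first by exists 0.
have rj' : r j j0 by have := r_total j0 j; rewrite (negbTE rj).
have b_in : apt B j0 - apt B j0 \in adir B j0 by rewrite subrr mem0v.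
have [u uB gu] := minimal_onto rj' b_in.
by exists u.
Qed.

Definition pre j : E j := sval (cid (below_preimage j)).
Lemma preP j : ~~ r j0 j -> pre j - apt B j \in adir B j /\ g j j0 (pre j) = apt B j0.
Proof. by rewrite /pre; case: (cid _). Qed.

Definition shrink : affam :=
  AffFam (fun j => if r j0 j then g j0 j (apt B j0) else pre j)
         (fun j => if r j0 j then 0%VS else (adir B j :&: lker (g j j0))%VS).

Lemma shrink_admissible : admissible shrink.
Proof.
have [fib dirker ptc dirc] := B_adm.
have below j : ~~ r j0 j -> r j j0 by move=> rj; have := r_total j0 j; rewrite (negbTE rj).
split=> [k|k|i k rik|i k rik] /=.
- case: ifP => rk; first by rewrite h_g // fib.
  have [pre_in _] := preP (negbT rk).
  by move/(subvP (dirker k)): pre_in; rewrite memv_ker raddfB /= fib subr_eq0 => /eqP.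
- by case: ifP => _; [exact: sub0v | exact: subv_trans (capvSl _ _) (dirker k)].
- case: ifP => ri; case: ifP => rk.
  + by rewrite -g_comp // subrr mem0v.
  + by rewrite (r_trans ri rik) in rk.
  + have [_ gi] := preP (negbT ri).
    by rewrite (g_comp (below _ (negbT ri)) rk) gi subrr mem0v.
  + have [pi gi] := preP (negbT ri); have [pk gk] := preP (negbT rk).
    rewrite memv_cap memv_ker raddfB /= -g_comp ?below ?ri ?rk // gi gk subrr eqxx andbT.
    have -> : g i k (pre i) - pre k =
        g i k (pre i - apt B i) + (g i k (apt B i) - apt B k) - (pre k - apt B k).
      by rewrite raddfB /= !addrA subrK opprB addrA subrK.
    by rewrite rpredB // memvD ?ptc // (subvP (dirc _ _ rik)) // memv_img.
- case: ifP => ri; case: ifP => rk.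
  + by rewrite limg0 sub0v.
  + by rewrite (r_trans ri rik) in rk.
  + apply/subvP => _ /memv_imgP[v + ->]; rewrite memv_cap memv_ker => /andP[_ /eqP gv0].
    by rewrite (g_comp (below _ (negbT ri)) rk) gv0 linear0 memv0.
  + apply/subvP => _ /memv_imgP[v + ->]; rewrite memv_cap memv_ker => /andP[vB /eqP gv0].
    rewrite memv_cap memv_ker -g_comp ?below ?ri ?rk // gv0 eqxx andbT.
    by apply: (subvP (dirc _ _ rik)); exact: memv_img.
Qed.

Lemma shrink_refines : refines shrink B.
Proof.
have [_ _ ptc _] := B_adm.
move=> k; rewrite /refines_at /=; case: ifP => rk; first by rewrite ptc // sub0v.
by have [-> _] := preP (negbT rk); rewrite capvSl.
Qed.

End Shrink.

Lemma minimal_dir0 j : adir B j = 0%VS.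
Proof.
have := B_min (shrink_admissible j) (shrink_refines j) j.
by rewrite /refines_at /= r_refl subv0 => /andP[_ /eqP].
Qed.

End MinimalFamily.

Theorem compatible_section : exists e : forall j, E j,
  (forall j, h j (e j) = c) /\ forall i j, r i j -> g i j (e i) = e j.
Proof.
have [B [B_adm B_min]] := minimal_admissible.
have [fib _ ptc _] := B_adm.
exists (apt B); split=> // i j rij.
by have := ptc i j rij; rewrite (minimal_dir0 B_adm B_min) memv0 subr_eq0 => /eqP.
Qed.

End MittagLeffler.

(* Take w minimising the sum
   of the least dimensions of members (or X) containing w; then w avoids the sum
   of the largest members of the two chains that avoid w, and Y is any complement
   of <[w]> containing that sum. *)
Section GoodVector.
Variables (F : fieldType) (X : vectType F).

Definition chainv (P : {vspace X} -> Prop) :=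
  forall A B, P A -> P B -> (A <= B)%VS \/ (B <= A)%VS.

Lemma least_cover (P : {vspace X} -> Prop) (w : X) :
  exists A, [/\ P A \/ A = fullv, w \in A &
    forall B, P B \/ B = fullv -> w \in B -> (\dim A <= \dim B)%N].
Proof.
have [n [[A [PA wA <-]] minn]] := ex_minn_Prop
  (ex_intro (fun n => exists A, [/\ P A \/ A = fullv, w \in A & \dim A = n]) _
     (ex_intro _ fullv (And3 (or_intror erefl) (memvf w) erefl))).
by exists A; split=> // B PB wB; apply: minn; exists B.
Qed.

Definition cover_dim P w : nat := \dim (sval (cid (least_cover P w))).

Lemma cover_dimP P w :
  exists A, [/\ P A \/ A = fullv, w \in A & \dim A = cover_dim P w].
Proof. by rewrite /cover_dim; case: (cid _) => A [? ? ?] /=; exists A. Qed.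

Lemma cover_dim_le P w B : P B \/ B = fullv -> w \in B -> (cover_dim P w <= \dim B)%N.
Proof. by rewrite /cover_dim; case: (cid _) => A [_ _ minA] /=; exact: minA. Qed.

Lemma largest_avoiding (P : {vspace X} -> Prop) (w : X) : w != 0 -> chainv P ->
  exists A0, [/\ A0 = 0%VS \/ P A0, w \notin A0 &
    forall A, P A -> w \notin A -> (A <= A0)%VS].
Proof.
move=> w_neq0 chP.
have [[A [PA wA]]|noA] := pselect (exists A, P A /\ w \notin A); last first.
  exists 0%VS; split; [by left | by rewrite memv0 |].
  by move=> A PA wA; case: noA; exists A.
have [n [[A0 [[PA0 wA0] <-]] minn]] := ex_minn_Prop
  (ex_intro (fun n => exists A, (P A /\ w \notin A) /\ (\dim {:X} - \dim A)%N = n) _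
     (ex_intro _ A (conj (conj PA wA) erefl))).
exists A0; split=> [||B PB wB]; [by right | by [] |].
case: (chP _ _ PA0 PB) => // A0B.
have codim := minn _ (ex_intro _ B (conj (conj PB wB) erefl)).
have dimB := dimvS (subvf B).
by have /leqifP := dimv_leqif_sup A0B; case: ifP => // _ ltAB; exfalso; lia.
Qed.

Lemma good_vector (x0 : X) (PA PK : {vspace X} -> Prop) :
  x0 != 0 -> chainv PA -> chainv PK ->
  exists w (Y : {vspace X}), [/\ w != 0, w \notin Y, (<[w]> + Y)%VS = fullv &
    forall A, PA A \/ PK A -> w \notin A -> (A <= Y)%VS].
Proof.
move=> x0_neq0 chA chK.
have [n [[w [w_neq0 <-]] minn]] := ex_minn_Prop
  (ex_intro (fun n => exists w, w != 0 /\ (cover_dim PA w + cover_dim PK w)%N = n) _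
     (ex_intro _ x0 (conj x0_neq0 erefl))).
have [A0 [A0P wA0 A0max]] := largest_avoiding w_neq0 chA.
have [K0 [K0P wK0 K0max]] := largest_avoiding w_neq0 chK.
pose Z := (A0 + K0)%VS.
have wZ : w \notin Z.
  apply/negP => /memv_addP[a aA0 [k kK0 w_ak]].
  have [a0|a_neq0] := eqVneq a 0; first by move: wK0; rewrite w_ak a0 add0r kK0.
  have PA0 : PA A0 by case: A0P => // A00; move: aA0; rewrite A00 memv0 (negbTE a_neq0).
  have [Aw [AwP wAw dimAw]] := cover_dimP PA w.
  have [Kw [KwP wKw dimKw]] := cover_dimP PK w.
  have A0Aw : (A0 <= Aw)%VS.
    case: AwP => [PAw|->]; last exact: subvf.
    by case: (chA _ _ PA0 PAw) => // AwA0; move: wA0; rewrite (subvP AwA0).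
  have ltA : (\dim A0 < \dim Aw)%N.
    have /leqifP := dimv_leqif_sup A0Aw; case: ifP => // AwA0.
    by move: wA0; rewrite (subvP AwA0).
  have K0Kw : (K0 <= Kw)%VS.
    case: K0P => [->|PK0]; first exact: sub0v.
    case: KwP => [PKw|->]; last exact: subvf.
    by case: (chK _ _ PK0 PKw) => // KwK0; move: wK0; rewrite (subvP KwK0).
  have dimA : (cover_dim PA a <= \dim A0)%N by apply: cover_dim_le => //; left.
  have dimK : (cover_dim PK a <= \dim Kw)%N.
    apply: cover_dim_le => //; have -> : a = w - k by rewrite w_ak addrK.
    by rewrite rpredB // (subvP K0Kw).
  have := minn _ (ex_intro _ a (conj a_neq0 erefl)); lia.
exists w, (Z + (Z + <[w]>)^C)%VS; split=> //.
- apply/negP => /memv_addP[z zZ [u uC w_zu]].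
  have : u \in ((Z + <[w]>) :&: (Z + <[w]>)^C)%VS.
    rewrite memv_cap uC andbT; have -> : u = - z + w by rewrite w_zu addKr.
    by apply: memv_add; [rewrite rpredN | exact: memv_line].
  rewrite capv_compl memv0 => /eqP u0.
  by move: wZ; rewrite w_zu u0 addr0 zZ.
- apply/eqP; rewrite eqEsubv subvf /= -(addv_complf (Z + <[w]>)%VS).
  by rewrite [(Z + _)%VS]addvC -!addvA addvS // addvA.
- move=> A [PA_A|PK_A] wA.
    exact: subv_trans (A0max _ PA_A wA) (subv_trans (addvSl _ _) (addvSl _ _)).
  exact: subv_trans (K0max _ PK_A wA) (subv_trans (addvSr _ _) (addvSl _ _)).
Qed.

End GoodVector.

Definition precomp (F : fieldType) (A B : vectType F) (g : 'Hom(A, B))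
  (phi : 'Hom(B, F^o)) : 'Hom(A, F^o) := (phi \o g)%VF.

Lemma precomp_is_linear (F : fieldType) (A B : vectType F) (g : 'Hom(A, B)) :
  linear (@precomp F A B g).
Proof.
move=> k phi psi; apply/lfunP => v.
by rewrite /precomp comp_lfunE !add_lfunE !scale_lfunE !comp_lfunE.
Qed.

HB.instance Definition _ (F : fieldType) (A B : vectType F) (g : 'Hom(A, B)) :=
  GRing.isLinear.Build F _ _ _ (@precomp F A B g) (precomp_is_linear g).

Lemma functional_factor (F : fieldType) (U V : vectType F) (A : 'Hom(U, V))
  (psi : 'Hom(U, F^o)) :
  (forall u, A u = 0 -> psi u = 0) -> exists phi : 'Hom(V, F^o), forall u, phi (A u) = psi u.
Proof.
move=> psi_ker; exists (psi \o A^-1)%VF => u; rewrite comp_lfunE.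
have Au : A u \in limg A by apply: memv_img; exact: memvf.
apply/eqP; rewrite -subr_eq0 -linearB /=; apply/eqP; apply: psi_ker.
by rewrite linearB /= limg_lfunVK // subrr.
Qed.

Definition scale_by (F : fieldType) (V : vectType F) (v : V) (k : F^o) : V := k *: v.
Lemma scale_by_is_linear (F : fieldType) (V : vectType F) (v : V) : linear (@scale_by F V v).
Proof. by move=> k a b; rewrite /scale_by scalerDl scalerA. Qed.
HB.instance Definition _ (F : fieldType) (V : vectType F) (v : V) :=
  GRing.isLinear.Build F _ _ _ (@scale_by F V v) (scale_by_is_linear v).

Lemma functional_one (F : fieldType) (V : vectType F) (v : V) : v != 0 ->
  exists phi : 'Hom(V, F^o), phi v = 1.
Proof.
move=> v_neq0.
have line_inj (k : F^o) : linfun (@scale_by F V v) k = 0 -> \1%VF k = 0.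
  by rewrite !lfunE /= /scale_by => /eqP; rewrite scaler_eq0 (negbTE v_neq0) orbF => /eqP.
have [phi phiE] := functional_factor line_inj.
by exists phi; have := phiE 1; rewrite !lfunE /= /scale_by scale1r.
Qed.

Lemma functional_on_complement (F : fieldType) (V : vectType F) (w : V) (Y : {vspace V}) :
  w \notin Y -> exists phi : 'Hom(V, F^o), phi w = 1 /\ forall y, y \in Y -> phi y = 0.
Proof.
move=> wY.
have w_neq0 : w != 0 by apply: contraNneq wY => ->; exact: mem0v.
have wY0 : (<[w]> :&: Y)%VS = 0%VS.
  apply/eqP; rewrite -subv0; apply/subvP => _ /memv_capP[/vlineP[k ->] kwY].
  have [->|k_neq0] := eqVneq k 0; first by rewrite scale0r mem0v.
  by move: wY; rewrite -(scalerK k_neq0 w) rpredZ.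
have [phi1 phi1w] := functional_one w_neq0.
exists (phi1 \o daddv_pi <[w]> Y)%VF; split.
  by rewrite comp_lfunE daddv_pi_id ?wY0 ?memv_line.
move=> y yY; rewrite comp_lfunE.
have := daddv_pi_add wY0 (subvP (addvSr _ _) _ yY).
rewrite (daddv_pi_id _ yY); last by rewrite capvC wY0.
by move/(congr1 (fun z => z - y)); rewrite addrK subrr => ->; rewrite linear0.
Qed.

Lemma extend_family (P : Type) (X : P -> Type) (C : pred P) (d : forall t, X t)
  (e : forall j : {t | C t}, X (sval j)) :
  exists l : forall t, X t, forall t (Ct : C t), l t = e (exist _ t Ct).
Proof.
exists (fun t => if @idP (C t) is ReflectT Ct then e (exist _ t Ct) else d t) => t Ct.
by case: {-}_ / idP => [Ct'|/(_ Ct) //]; rewrite (bool_irrelevance Ct' Ct).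
Qed.

Lemma glue_families (P : Type) (X : P -> Type) (R : P -> P -> Prop)
  (coh : forall t s, X t -> X s -> Prop) (D : P -> Prop) (C1 C2 : pred P)
  (p : P) (x0 : X p) (l1 l2 : forall t, X t) :
  (forall t, D t -> C1 t || C2 t) ->
  (forall t s, D t -> D s -> R t s -> C1 t -> C1 s) ->
  (forall t s, D t -> D s -> R t s -> C2 t -> C2 s) ->
  (forall t, D t -> C1 t -> C2 t -> t = p) ->
  (C1 p -> l1 p = x0) -> (C2 p -> l2 p = x0) ->
  (forall t s, D t -> D s -> R t s -> C1 t -> coh t s (l1 t) (l1 s)) ->
  (forall t s, D t -> D s -> R t s -> C2 t -> coh t s (l2 t) (l2 s)) ->
  exists l : forall t, X t, (D p -> l p = x0) /\
    forall t s, D t -> D s -> R t s -> coh t s (l t) (l s).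
Proof.
move=> cover C1_cl C2_cl meet l1p l2p coh1 coh2.
exists (fun t => if C1 t then l1 t else l2 t); split.
  move=> Dp; case C1p: (C1 p); first exact: l1p.
  by apply: l2p; have := cover p Dp; rewrite C1p.
move=> t s Dt Ds Rts; case C1t: (C1 t); first by rewrite (C1_cl t s) //; exact: coh1.
have C2t : C2 t by have := cover t Dt; rewrite C1t.
have C2s := C2_cl t s Dt Ds Rts C2t.
case C1s: (C1 s); last exact: coh2.
have sp := meet s Ds C1s C2s; move: Ds Rts C1s C2s; rewrite sp => Ds Rts C1p C2p.
by rewrite l1p // -(l2p C2p); exact: coh2.
Qed.

Section IntervalModuleMaps.
Variable F : fieldType.

Definition entry_sum n (c : 'rV[F]_n) : F^o := \sum_(i < n) c 0 i.
Lemma entry_sum_is_linear n : linear (@entry_sum n).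
Proof.
move=> k a b; rewrite /entry_sum.
rewrite (eq_bigr (fun i => k * a 0 i + b 0 i)) => [|i _]; last by rewrite !mxE.
by rewrite big_split /= -mulr_sumr.
Qed.
HB.instance Definition _ n :=
  GRing.isLinear.Build F _ _ _ (@entry_sum n) (@entry_sum_is_linear n).

Definition sum_row n m (c : 'rV[F]_n) : 'rV[F]_m := \row_(j < m) entry_sum c.
Lemma sum_row_is_linear n m : linear (@sum_row n m).
Proof. by move=> k a b; apply/rowP => j; rewrite !mxE linearP. Qed.
HB.instance Definition _ n m :=
  GRing.isLinear.Build F _ _ _ (@sum_row n m) (@sum_row_is_linear n m).

Definition coord_row (V : vectType F) n (q : 'Hom(V, F^o)) (v : V) : 'rV[F]_n :=
  \row_(j < n) (q v : F).
Lemma coord_row_is_linear (V : vectType F) n (q : 'Hom(V, F^o)) : linear (@coord_row V n q).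
Proof. by move=> k a b; apply/rowP => j; rewrite !mxE linearP. Qed.
HB.instance Definition _ (V : vectType F) n (q : 'Hom(V, F^o)) :=
  GRing.isLinear.Build F _ _ _ (@coord_row V n q) (@coord_row_is_linear V n q).

Lemma entry_sum_coord (V : vectType F) n (q : 'Hom(V, F^o)) v :
  entry_sum (coord_row n q v) = (q v : F) *+ n.
Proof.
rewrite /entry_sum (eq_bigr (fun _ => (q v : F))) => [|i _]; last by rewrite mxE.
by rewrite sumr_const card_ord.
Qed.

Definition sum_scale (V : vectType F) n (v : V) (c : 'rV[F]_n) : V := (entry_sum c : F) *: v.
Lemma sum_scale_is_linear (V : vectType F) n (v : V) : linear (@sum_scale V n v).
Proof. by move=> k a b; rewrite /sum_scale linearP scalerDl scalerA. Qed.
HB.instance Definition _ (V : vectType F) n (v : V) :=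
  GRing.isLinear.Build F _ _ _ (@sum_scale V n v) (@sum_scale_is_linear V n v).

Lemma kI_mapE (P : Type) (le : rel P) (I : pred P) t s (h : le t s) c :
  kI_map F (le := le) I t s h c = sum_row (I s) c.
Proof. by rewrite /kI_map -/(sum_row (I s)) (lfunE (@sum_row (I t) (I s))). Qed.

Lemma entry_sum_single n (c : 'rV[F]_n) (j : 'I_n) : (n <= 1)%N -> entry_sum c = c 0 j.
Proof.
case: n c j => [|[|n]] c j // _; first by case: j.
by rewrite /entry_sum big_ord1; congr (c 0 _); apply: val_inj; case: j => [[]].
Qed.

End IntervalModuleMaps.

Section PersistenceModules.
Variables (F : fieldType) (P : Type) (le : rel P).
Hypothesis refl_le : forall t, le t t.
Hypothesis trans_le : forall t s r, le t s -> le s r -> le t r.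
Variables (M : P -> vectType F) (f : forall p q, le p q -> 'Hom(M p, M q)).
Hypothesis f_pmod : is_pmod f.

(* The structure maps, extended by 0 to incomparable pairs. *)
Definition fmap t s : 'Hom(M t, M s) :=
  if @idP (le t s) is ReflectT h then f h else 0.

Lemma fmapE t s (h : le t s) : fmap t s = f h.
Proof. by rewrite /fmap; case: {-}_ / idP => [h'|/(_ h) //]; rewrite (bool_irrelevance h' h). Qed.

Lemma fmap_id t v : fmap t t v = v.
Proof. by rewrite (fmapE (refl_le t)); case: f_pmod => -> _. Qed.

Lemma fmap_comp t s r : le t s -> le s r -> forall v, fmap t r v = fmap s r (fmap t s v).
Proof.
move=> hts hsr v; rewrite (fmapE hts) (fmapE hsr) (fmapE (trans_le hts hsr)).
by case: f_pmod => _; apply.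
Qed.

Lemma img_mono t1 t2 q : le t1 t2 -> le t2 q -> (limg (fmap t1 q) <= limg (fmap t2 q))%VS.
Proof.
move=> h1 h2; apply/subvP => _ /memv_imgP[u _ ->].
by rewrite (fmap_comp h1 h2); apply: memv_img; exact: memvf.
Qed.

Lemma ker_mono q s1 s2 : le q s1 -> le s1 s2 -> (lker (fmap q s1) <= lker (fmap q s2))%VS.
Proof.
move=> h1 h2; apply/subvP => u; rewrite !memv_ker (fmap_comp h1 h2) => /eqP ->.
by rewrite linear0.
Qed.

Lemma img_id q : limg (fmap q q) = fullv.
Proof.
apply/eqP; rewrite eqEsubv subvf /=; apply/subvP => u _.
by rewrite -[u]fmap_id; apply: memv_img; exact: memvf.
Qed.

Lemma ker_id q : lker (fmap q q) = 0%VS.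
Proof. by apply/eqP; rewrite -subv0; apply/subvP => u; rewrite memv_ker fmap_id memv0. Qed.

Section Point.
Variables (p : P) (w : M p).

Lemma chain_lifts (C : pred P) :
  (forall t, C t -> le t p) -> (forall t s, C t -> C s -> le t s || le s t) ->
  (forall t, C t -> exists v, fmap t p v = w) ->
  exists l : forall t, M t, (forall t, C t -> fmap t p (l t) = w) /\
     (forall t s, C t -> C s -> le t s -> fmap t s (l t) = l s).
Proof.
move=> C_le C_tot C_lift.
pose r (i j : {t | C t}) := le (sval i) (sval j).
have := @compatible_section F _ r _ _ (fun j => M (sval j)) (M p)
   (fun j => fmap (sval j) p) (fun i j => fmap (sval i) (sval j)) _ _ w _.
case=> [|||||e [e_fib e_coh]].
- by move=> i j k; apply: trans_le.
- by move=> [i Ci] [j Cj]; exact: C_tot.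
- by move=> i j k hij hjk v; apply: fmap_comp.
- by move=> [i Ci] [j Cj] hij v; rewrite -fmap_comp //; apply: C_le.
- by move=> [j Cj]; exact: C_lift.
have [l lE] := extend_family (X := M) (fun t => 0) e.
exists l; split=> [t Ct|t s Ct Cs hts]; first by rewrite (lE t Ct); exact: (e_fib (exist _ t Ct)).
by rewrite (lE t Ct) (lE s Cs); exact: (e_coh (exist _ t Ct) (exist _ s Cs)).
Qed.

Lemma chain_cofunctionals (C : pred P) (phi0 : 'Hom(M p, F^o)) :
  (forall s, C s -> le p s) -> (forall t s, C t -> C s -> le t s || le s t) ->
  (forall s, C s -> forall v, fmap p s v = 0 -> phi0 v = 0) ->
  exists phi : forall s, 'Hom(M s, F^o),
     (forall s, C s -> forall v, phi s (fmap p s v) = phi0 v) /\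
     (forall t s, C t -> C s -> le t s -> forall v, phi s (fmap t s v) = phi t v).
Proof.
move=> C_ge C_tot C_ker.
pose r (i j : {t | C t}) := le (sval j) (sval i).
have := @compatible_section F _ r _ _
   (fun j => 'Hom(M (sval j), F^o)) 'Hom(M p, F^o)
   (fun j => linfun (@precomp F _ _ (fmap p (sval j))))
   (fun i j => linfun (@precomp F _ _ (fmap (sval j) (sval i)))) _ _ phi0 _.
case=> [|||||e [e_fib e_coh]].
- by move=> i j k hij hjk; apply: trans_le hjk hij.
- by move=> [i Ci] [j Cj]; rewrite /r /= orbC; exact: C_tot.
- move=> i j k hij hjk v; apply/lfunP => u.
  by rewrite !lfunE /precomp /= !comp_lfunE -fmap_comp.
- move=> [i Ci] [j Cj] hij v; apply/lfunP => u.
  by rewrite !lfunE /precomp /= !comp_lfunE -fmap_comp //; apply: C_ge.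
- move=> [j Cj] /=; have [phi phiE] := functional_factor (C_ker j Cj).
  by exists phi; rewrite lfunE /precomp /=; apply/lfunP => u; rewrite comp_lfunE.
have [phi phiE] := extend_family (X := fun s => 'Hom(M s, F^o)) (fun t => 0) e.
exists phi; split=> [s Cs v|t s Ct Cs hts v].
  by rewrite (phiE s Cs); have := e_fib (exist _ s Cs); rewrite lfunE /precomp /= => <-; rewrite comp_lfunE.
rewrite (phiE s Cs) (phiE t Ct); have := e_coh (exist _ s Cs) (exist _ t Ct) hts.
by rewrite lfunE /precomp /= => <-; rewrite comp_lfunE.
Qed.

End Point.

(* Given coherent lifts
   of w below p and coherent functionals above p extending a functional that is
   1 on w and 0 on Y, the lines through the lifts of w and the images of w form
   a submodule, and the preimages of Y below p together with the kernels of the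
   functionals above p (and everything elsewhere) form a complement. *)
Section Splitting.
Variables (p : P) (w : M p) (Y : {vspace M p}).
Hypothesis w_neq0 : w != 0.
Hypothesis wY : w \notin Y.
Hypothesis wY_full : (<[w]> + Y)%VS = fullv.

Definition lifts_to t : Prop := le t p /\ exists v, fmap t p v = w.
Definition survives_to s : bool := le p s && (fmap p s w != 0).

Hypothesis Y_img : forall t, le t p -> (forall v, fmap t p v != w) -> forall v, fmap t p v \in Y.

Variable lift : forall t, M t.
Hypothesis lift_p : lift p = w.
Hypothesis lift_coh : forall t s, lifts_to t -> lifts_to s -> le t s -> fmap t s (lift t) = lift s.
Variable cof : forall s, 'Hom(M s, F^o).
Hypothesis cof_w : cof p w = 1.
Hypothesis cof_Y : forall v, v \in Y -> cof p v = 0.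
Hypothesis cof_coh : forall t s, survives_to t -> survives_to s -> le t s ->
  forall v, cof s (fmap t s v) = cof t v.
Hypothesis lifts_cmp : forall t s, lifts_to t -> le t s -> le s p || le p s.
Hypothesis survives_cmp : forall t s, survives_to s -> le t s -> le t p || le p t.

Lemma lifts_to_p : lifts_to p.
Proof. by split=> //; exists w; rewrite fmap_id. Qed.

Lemma survives_to_p : survives_to p.
Proof. by rewrite /survives_to refl_le fmap_id. Qed.

Lemma lift_fib t : lifts_to t -> fmap t p (lift t) = w.
Proof. by move=> Lt; rewrite (lift_coh Lt lifts_to_p (proj1 Lt)). Qed.

Lemma cof_fib s : survives_to s -> forall v, cof s (fmap p s v) = cof p v.
Proof. by move=> Ss v; rewrite (cof_coh survives_to_p Ss (proj1 (andP Ss))). Qed.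

Definition gen t : M t :=
  if le t p then (if `[< lifts_to t >] then lift t else 0)
  else if le p t then fmap p t w else 0.

Definition compl t : {vspace M t} :=
  if le t p then (fmap t p @^-1: Y)%VS
  else if survives_to t then lker (cof t) else fullv.

Lemma gen_p : gen p = w.
Proof. by rewrite /gen refl_le (asboolT lifts_to_p) lift_p. Qed.

Lemma gen_map t s : le t s -> gen t = 0 \/ fmap t s (gen t) = gen s.
Proof.
move=> hts; rewrite /gen; case: ifP => htp.
  case: (boolP `[< lifts_to t >]) => [/asboolP Lt|]; last by left.
  right; case: ifP => hsp.
    have Ls : lifts_to s by split=> //; exists (fmap t s (lift t)); rewrite -fmap_comp ?lift_fib.
    by rewrite asboolT // lift_coh.
  case: ifP => hps; first by rewrite (fmap_comp htp hps) lift_fib.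
  by have := lifts_cmp Lt hts; rewrite hsp hps.
case: ifP => hpt; last by left.
have -> : le s p = false by apply: contraFF htp => /(trans_le hts).
by right; rewrite (trans_le hpt hts) -fmap_comp.
Qed.

Lemma gen_stable t s : le t s -> (fmap t s @: <[gen t]> <= <[gen s]>)%VS.
Proof.
move=> hts; rewrite limg_line -memvE.
by case: (gen_map hts) => ->; rewrite ?linear0 ?mem0v ?memv_line.
Qed.

Lemma compl_stable t s : le t s -> (fmap t s @: compl t <= compl s)%VS.
Proof.
move=> hts; apply/subvP => _ /memv_imgP[v + ->]; rewrite /compl.
case: ifP => htp vY.
  rewrite -memv_preim in vY; case: ifP => hsp; first by rewrite -memv_preim -fmap_comp.
  case Ss: (survives_to s); last exact: memvf.
  have hps : le p s by case/andP: Ss.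
  by rewrite memv_ker (fmap_comp htp hps) cof_fib // cof_Y.
have -> : le s p = false by apply: contraFF htp => /(trans_le hts).
case Ss: (survives_to s); last exact: memvf.
have hpt : le p t by have := survives_cmp Ss hts; rewrite htp.
have St : survives_to t.
  rewrite /survives_to hpt; apply: contraNneq (proj2 (andP Ss)) => w0.
  by rewrite (fmap_comp hpt hts) w0 linear0.
by rewrite St memv_ker in vY; rewrite memv_ker cof_coh.
Qed.

Lemma gen_compl_full t : (<[gen t]> + compl t)%VS = fullv.
Proof.
apply/eqP; rewrite eqEsubv subvf /=; apply/subvP => v _; rewrite /gen /compl.
case: ifP => htp.
  case: (boolP `[< lifts_to t >]) => [/asboolP Lt|nLt].
    have : fmap t p v \in (<[w]> + Y)%VS by rewrite wY_full memvf.
    case/memv_addP => _ /vlineP[k ->] [y yY vE].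
    rewrite -[v](subrK (k *: lift t)) addrC memv_add ?memvZ ?memv_line //.
    by rewrite -memv_preim linearB /= linearZ /= lift_fib // vE addrC addKr.
  rewrite -[v]add0r memv_add ?mem0v // -memv_preim; apply: Y_img => // u.
  by apply: contraNneq nLt => uE; apply/asboolP; split=> //; exists u.
case St: (survives_to t); last by apply: (subvP (addvSr _ _)); exact: memvf.
have hpt : le p t by case/andP: St.
have cof1 : cof t (fmap p t w) = 1 by rewrite cof_fib // cof_w.
rewrite hpt -[v](subrK ((cof t v : F) *: fmap p t w)) addrC memv_add ?memvZ ?memv_line //.
by rewrite memv_ker linearB /= linearZ /= cof1 /GRing.scale /= mulr1 subrr.
Qed.

Lemma gen_compl_cap t : (<[gen t]> :&: compl t)%VS = 0%VS.
Proof.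
apply/eqP; rewrite -subv0; apply/subvP => _ /memv_capP[/vlineP[k ->]].
rewrite memv0 /gen /compl; case: ifP => htp.
  case: (boolP `[< lifts_to t >]) => [/asboolP Lt|_]; last by rewrite scaler0.
  rewrite -memv_preim linearZ /= lift_fib // => kwY.
  have [->|k_neq0] := eqVneq k 0; first by rewrite scale0r.
  by move: wY; rewrite -(scalerK k_neq0 w) rpredZ.
case St: (survives_to t); last first.
  case: ifP => hpt; last by rewrite scaler0.
  by move: St; rewrite /survives_to hpt /= => /negbFE /eqP ->; rewrite scaler0.
have hpt : le p t by case/andP: St.
rewrite hpt memv_ker linearZ /= cof_fib // cof_w.
by rewrite -[k%:A]/(k * 1) mulr1 => /eqP ->; rewrite scale0r.
Qed.

Definition gen_support t : bool := gen t != 0.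

Lemma support_cmp t : gen_support t -> le t p || le p t.
Proof. by rewrite /gen_support /gen; case: ifP => // _; case: ifP => //; rewrite eqxx. Qed.

Lemma support_interval : is_interval le gen_support.
Proof.
split.
- by exists p; rewrite /gen_support gen_p.
- move=> t s r hts hsr It Ir; apply: contraNN Ir => /eqP s0.
  case: (gen_map hts) => [t0|gts]; first by rewrite /gen_support t0 eqxx in It.
  case: (gen_map (trans_le hts hsr)) => [t0|<-]; first by rewrite /gen_support t0 eqxx in It.
  by rewrite (fmap_comp hts hsr) gts s0 linear0 eqxx.
- move=> t s It Is; exists [:: p; s]; split=> //=.
  + by apply/and3P; split=> //; rewrite /gen_support gen_p.
  + by apply/and3P; split=> //; [exact: support_cmp | rewrite orbC; exact: support_cmp].
Qed.

Hypothesis M_indec : indecomposable f.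

(* The first summand is non-zero at p, so the second one vanishes. *)
Lemma compl0 t : compl t = 0%VS.
Proof.
case: M_indec => _ /(_ (fun t => <[gen t]>%VS) compl) [||||/(_ p)|] //.
- by move=> a b h; rewrite -(fmapE h); exact: gen_stable.
- by move=> a b h; rewrite -(fmapE h); exact: compl_stable.
- exact: gen_compl_full.
- exact: gen_compl_cap.
- by rewrite gen_p => /eqP; rewrite -dimv_eq0 dim_vline w_neq0.
Qed.

Lemma gen_spans t (v : M t) : exists k, v = k *: gen t.
Proof. by apply/vlineP; have := gen_compl_full t; rewrite compl0 addv0 => ->; exact: memvf. Qed.

Lemma support_of_index n t (j : 'I_n) : n = gen_support t -> gen_support t.
Proof. by case: n j => [[]//|n] _; case: (gen_support t). Qed.

Lemma gen_coord t : exists q : 'Hom(M t, F^o), gen_support t -> q (gen t) = 1.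
Proof.
case: (boolP (gen_support t)) => St; last by exists 0.
by have [q q1] := functional_one St; exists q.
Qed.

Definition coord t : 'Hom(M t, F^o) := sval (cid (gen_coord t)).
Lemma coord_gen t : gen_support t -> coord t (gen t) = 1.
Proof. by rewrite /coord; case: (cid _). Qed.

Lemma splitting_iso : pmod_iso f (kI_map F (le := le) gen_support).
Proof.
have gen0 t : ~~ gen_support t -> gen t = 0 by rewrite negbK => /eqP.
exists (fun t => linfun (@coord_row F (M t) (gen_support t) (coord t))
                 : 'Hom(M t, kI_obj F gen_support t)).
exists (fun t => linfun (@sum_scale F (M t) (gen_support t) (gen t))
                 : 'Hom(kI_obj F gen_support t, M t)).
split.
- move=> t s h v; rewrite -(fmapE h) kI_mapE !lfunE /=; apply/rowP => j.
  have Ss := support_of_index j erefl.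
  rewrite !mxE entry_sum_coord; have [k ->] := gen_spans v.
  case: (boolP (gen_support t)) => St; last by rewrite gen0 // scaler0 !linear0 mulr0n.
  case: (gen_map h) => [t0|gts]; first by rewrite /gen_support t0 eqxx in St.
  by rewrite linearZ /= gts !linearZ /= !coord_gen.
- move=> t v; rewrite !lfunE /= /sum_scale entry_sum_coord; have [k ->] := gen_spans v.
  case: (boolP (gen_support t)) => St; last by rewrite gen0 // !scaler0.
  by rewrite linearZ /= coord_gen // mulr1n -[k%:A]/(k * 1) mulr1.
- move=> t c; rewrite !lfunE /= /sum_scale; apply/rowP => j.
  have St := support_of_index j erefl.
  rewrite mxE linearZ /= coord_gen // -[(entry_sum c)%:A]/(entry_sum c * 1) mulr1.
  exact: entry_sum_single (leq_b1 _).
Qed.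

End Splitting.
End PersistenceModules.

Section Hook.
Variables (dS dT : Order.disp_t) (S : orderType dS) (T : orderType dT).
Variables (x : S) (y : T) (dir : bool).
Local Notation Q := (Qty dir x y).
Local Notation le := (Qle dir x y).

Lemma Qle_refl (t : Q) : le t t.
Proof. by rewrite /Qle !lexx. Qed.

Lemma Qle_trans (t s r : Q) : le t s -> le s r -> le t r.
Proof. by move=> /andP[h1 h2] /andP[h3 h4]; rewrite /Qle (le_trans h1 h3) (le_trans h2 h4). Qed.

Lemma Qle_anti (t s : Q) : le t s -> le s t -> t = s.
Proof.
case: t s => [[a b] ?] [[c d] ?] /andP[/= ac bd] /andP[/= ca db].
by apply: val_inj; rewrite /= (@le_anti _ _ a c) ?ac ?ca // (@le_anti _ _ b d) ?bd ?db.
Qed.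

Lemma corner_in : Qset dir x y (x, y).
Proof. by rewrite /Qset /= !eqxx !lexx; case: dir. Qed.

Definition corner : Q := exist _ (x, y) corner_in.

Definition vertical (t : Q) : bool := (sval t).1 == x.

Lemma horizontal_off (t : Q) : ~~ vertical t -> (sval t).2 = y.
Proof.
case: t => [[a b] /=]; rewrite /vertical /Qset /= => + /negbTE ax.
by rewrite ax; case: dir => /=; case/andP=> _ /eqP.
Qed.

Lemma corner_eq (t : Q) : vertical t -> (sval t).2 = y -> t = corner.
Proof. by case: t => [[a b] ?] /eqP /= ax by'; apply: val_inj; rewrite /= ax by'. Qed.

Lemma corner_max (t : Q) : dir -> le t corner.
Proof.
move=> d; case: t => [[a b] H]; rewrite /Qle /=; move: H; rewrite /Qset d /=.
by case/orP=> [/andP[/eqP -> h]|/andP[h /eqP ->]]; rewrite lexx h.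
Qed.

Lemma corner_min (t : Q) : ~~ dir -> le corner t.
Proof.
move=> d; case: t => [[a b] H]; rewrite /Qle /=; move: H; rewrite /Qset (negbTE d) /=.
by case/orP=> [/andP[/eqP -> h]|/andP[h /eqP ->]]; rewrite lexx h.
Qed.

Lemma corner_cmp (t : Q) : le t corner || le corner t.
Proof. by case/orP: (orbN dir) => d; [rewrite corner_max | rewrite corner_min ?orbT]. Qed.

Lemma corner_between (t s : Q) : le t corner -> le corner s -> t = corner \/ s = corner.
Proof.
move=> htc hcs; case/orP: (orbN dir) => d.
  by right; apply: Qle_anti => //; exact: corner_max.
by left; apply: Qle_anti => //; exact: corner_min.
Qed.

Lemma same_arm_cmp (t s : Q) : vertical t = vertical s -> le t s || le s t.
Proof.
case vt: (vertical t) => /esym vs.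
  move: vt vs; case: t => [[a b] ?]; case: s => [[c d] ?].
  rewrite /vertical /Qle /= => /eqP -> /eqP ->.
  by rewrite !lexx /=; exact: le_total.
move: (horizontal_off (negbT vt)) (horizontal_off (negbT vs)).
case: t {vt} => [[a b] ?]; case: s {vs} => [[c d] ?]; rewrite /Qle /= => -> ->.
by rewrite !lexx !andbT; exact: le_total.
Qed.

Lemma arms_incomparable (u v : Q) : vertical u -> ~~ vertical v -> u != corner ->
  ~~ le u v && ~~ le v u.
Proof.
move=> vu vv uc; have hv := horizontal_off vv.
have bu : (sval u).2 != y by apply: contraNneq uc => /(corner_eq vu) ->.
move: vu vv hv bu; case: u {uc} => [[a b] Hu]; case: v => [[c d] Hv] /=.
rewrite /vertical /Qle /= => /eqP ea /negPf ec ed bne; move: Hu Hv.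
rewrite /Qset /= ea ec ed (negbTE bne) !eqxx !andbF !orbF !andbT.
case: dir => /= hb hc; apply/andP; split; apply/negP => /andP[h1 h2].
- by move: ec; rewrite (@le_anti _ _ c x) ?h1 ?hc ?eqxx.
- by move: bne; rewrite (@le_anti _ _ b y) ?h2 ?hb ?eqxx.
- by move: bne; rewrite (@le_anti _ _ b y) ?h2 ?hb ?eqxx.
- by move: ec; rewrite (@le_anti _ _ c x) ?h1 ?hc ?eqxx.
Qed.

Lemma arm_preserved (t s : Q) : t != corner -> s != corner -> le t s ->
  vertical t = vertical s.
Proof.
move=> tc sc hts; case vt: (vertical t); case vs: (vertical s) => //.
  by have /andP[/negP] := arms_incomparable vt (negbT vs) tc.
by have /andP[_ /negP] := arms_incomparable vs (negbT vt) sc.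
Qed.

Lemma above_cmp (q t s : Q) : q != corner -> le q t -> le q s -> le t s || le s t.
Proof.
move=> qc hqt hqs.
have [->|tc] := eqVneq t corner; first by rewrite orbC corner_cmp.
have [->|sc] := eqVneq s corner; first exact: corner_cmp.
by apply: same_arm_cmp; rewrite -(arm_preserved qc tc hqt) (arm_preserved qc sc hqs).
Qed.

Lemma below_cmp (q t s : Q) : q != corner -> le t q -> le s q -> le t s || le s t.
Proof.
move=> qc htq hsq.
have [->|tc] := eqVneq t corner; first by rewrite orbC corner_cmp.
have [->|sc] := eqVneq s corner; first exact: corner_cmp.
by apply: same_arm_cmp; rewrite (arm_preserved tc qc htq) (arm_preserved sc qc hsq).
Qed.

Definition on_arm (b : bool) (t : Q) : bool := (vertical t == b) || (t == corner).

Lemma on_arm_cover t : on_arm true t || on_arm false t.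
Proof. by rewrite /on_arm; case: (vertical t); rewrite ?orbT. Qed.

Lemma on_arm_meet t : on_arm true t -> on_arm false t -> t = corner.
Proof. by rewrite /on_arm; case: (vertical t) => /= [_ /eqP|/eqP]. Qed.

Lemma on_arm_cmp b t s : on_arm b t -> on_arm b s -> le t s || le s t.
Proof.
move=> /orP[/eqP vt|/eqP ->]; last by rewrite orbC corner_cmp.
move=> /orP[/eqP vs|/eqP ->]; last exact: corner_cmp.
by apply: same_arm_cmp; rewrite vt vs.
Qed.

Lemma on_arm_up b t s : le t s -> (t = corner -> s = corner) -> on_arm b t -> on_arm b s.
Proof.
move=> hts tcs; have [->|sc] := eqVneq s corner; first by rewrite /on_arm eqxx orbT.
have tc : t != corner by apply: contra_neq sc => /tcs.
by rewrite /on_arm (negbTE tc) (negbTE sc) !orbF (arm_preserved tc sc hts).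
Qed.

Lemma on_arm_down b t s : le t s -> (s = corner -> t = corner) -> on_arm b s -> on_arm b t.
Proof.
move=> hts sct; have [->|tc] := eqVneq t corner; first by rewrite /on_arm eqxx orbT.
have sc : s != corner by apply: contra_neq tc => /sct.
by rewrite /on_arm (negbTE tc) (negbTE sc) !orbF (arm_preserved tc sc hts).
Qed.

Variables (F : fieldType) (M : Q -> vectType F) (f : forall p q, le p q -> 'Hom(M p, M q)).
Hypothesis f_pmod : is_pmod f.

Local Notation fm := (fmap f).
Let fm_id := fmap_id Qle_refl f_pmod.
Let img_id := img_id Qle_refl f_pmod.
Let ker_id := ker_id Qle_refl f_pmod.
Let img_mono := img_mono Qle_trans f_pmod.
Let ker_mono := ker_mono Qle_trans f_pmod.

Definition good_point (p : Q) : Prop := p = corner \/ forall v : M corner, v = 0.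

Lemma lifts_to_corner p (w : M p) : w != 0 -> good_point p ->
  lifts_to f w corner -> p = corner.
Proof.
move=> w_neq0 [//|M0] [_ [v vw]]; move: w_neq0.
by rewrite -vw (M0 v) linear0 eqxx.
Qed.

Lemma survives_to_corner p (w : M p) : good_point p -> survives_to f w corner -> p = corner.
Proof. by case=> [//|M0] /andP[_]; rewrite (M0 (fm p corner w)) eqxx. Qed.

Definition arm_spaces (b : bool) (A : {vspace M corner}) : Prop :=
  exists t, on_arm b t /\
    ((le t corner /\ A = limg (fm t corner)) \/ (le corner t /\ A = lker (fm corner t))).

Lemma arm_spaces_chain b : chainv (arm_spaces b).
Proof.
move=> A1 A2 [t1 [a1 H1]] [t2 [a2 H2]].
case: H1 => [[l1 ->]|[l1 ->]]; case: H2 => [[l2 ->]|[l2 ->]].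
- by case/orP: (on_arm_cmp a1 a2) => h; [left|right]; apply: img_mono.
- by right; case: (corner_between l1 l2) => ->; rewrite (img_id, ker_id) ?subvf ?sub0v.
- by left; case: (corner_between l2 l1) => ->; rewrite (img_id, ker_id) ?subvf ?sub0v.
- by case/orP: (on_arm_cmp a1 a2) => h; [left|right]; apply: ker_mono.
Qed.

Lemma hook_space_chains p :
  exists PA PK : {vspace M p} -> Prop, [/\ chainv PA, chainv PK,
    forall t, le t p -> PA (limg (fm t p)) \/ PK (limg (fm t p)) &
    forall s, le p s -> PA (lker (fm p s)) \/ PK (lker (fm p s))].
Proof.
have [->|pc] := eqVneq p corner.
  exists (arm_spaces true), (arm_spaces false); split; try exact: arm_spaces_chain.
    by move=> t htc; case/orP: (on_arm_cover t) => a; [left|right]; exists t; split=> //; left.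
  by move=> s hcs; case/orP: (on_arm_cover s) => a; [left|right]; exists s; split=> //; right.
exists (fun A => exists2 t, le t p & A = limg (fm t p)).
exists (fun A => exists2 s, le p s & A = lker (fm p s)); split.
- move=> _ _ [t1 h1 ->] [t2 h2 ->].
  by case/orP: (below_cmp pc h1 h2) => h; [left|right]; apply: img_mono.
- move=> _ _ [s1 h1 ->] [s2 h2 ->].
  by case/orP: (above_cmp pc h1 h2) => h; [left|right]; apply: ker_mono.
- by move=> t htp; left; exists t.
- by move=> s hps; right; exists s.
Qed.

Lemma lifts_on_arm p (w : M p) b t s : w != 0 -> good_point p ->
  lifts_to f w t -> lifts_to f w s -> le t s -> on_arm b t -> on_arm b s.
Proof.
move=> w_neq0 gp Lt [hsp _] hts; apply: on_arm_up (hts) _ => tc.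
move: Lt; rewrite tc => /(lifts_to_corner w_neq0 gp) pc.
by apply: Qle_anti; [rewrite -pc | rewrite -tc].
Qed.

Lemma survives_on_arm p (w : M p) b t s : good_point p ->
  survives_to f w s -> survives_to f w t -> le t s -> on_arm b s -> on_arm b t.
Proof.
move=> gp Ss /andP[hpt _] hts; apply: on_arm_down (hts) _ => sc.
move: Ss; rewrite sc => /(survives_to_corner gp) pc.
by apply: Qle_anti; [rewrite -sc | rewrite -pc].
Qed.

Lemma hook_lifts_cmp p (w : M p) t s : w != 0 -> good_point p ->
  lifts_to f w t -> le t s -> le s p || le p s.
Proof.
move=> w_neq0 gp Lt hts; have [->|pc] := eqVneq p corner; first exact: corner_cmp.
have tc : t != corner.
  by apply: contraNneq pc => tc; apply/eqP/(lifts_to_corner w_neq0 gp); rewrite -tc.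
by have := above_cmp tc hts (proj1 Lt); rewrite orbC.
Qed.

Lemma hook_survives_cmp p (w : M p) t s : good_point p ->
  survives_to f w s -> le t s -> le t p || le p t.
Proof.
move=> gp Ss hts; have [->|pc] := eqVneq p corner; first exact: corner_cmp.
have sc : s != corner.
  by apply: contraNneq pc => sc; apply/eqP/(@survives_to_corner p w gp); rewrite -sc.
exact: below_cmp sc hts (proj1 (andP Ss)).
Qed.

Lemma hook_lifts p (w : M p) : w != 0 -> good_point p ->
  exists lift : forall t, M t, lift p = w /\
    forall t s, lifts_to f w t -> lifts_to f w s -> le t s -> fm t s (lift t) = lift s.
Proof.
move=> w_neq0 gp.
pose C b t := on_arm b t && `[< lifts_to f w t >].
have arm_lift b : exists l : forall t, M t, (forall t, C b t -> fm t p (l t) = w) /\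
    (forall t s, C b t -> C b s -> le t s -> fm t s (l t) = l s).
  apply: (chain_lifts Qle_trans f_pmod).
  - by move=> t /andP[_ /asboolP[]].
  - by move=> t s /andP[bt _] /andP[bs _]; exact: on_arm_cmp bt bs.
  - by move=> t /andP[_ /asboolP[_]].
have Lp : lifts_to f w p := lifts_to_p Qle_refl f_pmod w.
have at_p b (l : forall t, M t) : (forall t, C b t -> fm t p (l t) = w) -> on_arm b p -> l p = w.
  by move=> fib bp; rewrite -[l p]fm_id fib // /C bp asboolT.
have [l1 [fib1 coh1]] := arm_lift true; have [l2 [fib2 coh2]] := arm_lift false.
have meet t : lifts_to f w t -> on_arm true t -> on_arm false t -> t = p.
  move=> Lt ta tf; have tc := on_arm_meet ta tf.
  by rewrite tc (lifts_to_corner w_neq0 gp) // -tc.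
have arm_coh b l : (forall t s, C b t -> C b s -> le t s -> fm t s (l t) = l s) ->
    forall t s, lifts_to f w t -> lifts_to f w s -> le t s -> on_arm b t -> fm t s (l t) = l s.
  move=> coh t s Lt Ls hts bt; apply: coh => //; rewrite /C ?asboolT ?bt ?andbT //.
  exact: lifts_on_arm w_neq0 gp Lt Ls hts bt.
have [l [lp lcoh]] := @glue_families _ M (fun t s => le t s) (fun t s u v => fm t s u = v)
  (lifts_to f w) (on_arm true) (on_arm false) p w l1 l2
  (fun t _ => on_arm_cover t) (fun t s Lt Ls hts => lifts_on_arm w_neq0 gp Lt Ls hts)
  (fun t s Lt Ls hts => lifts_on_arm w_neq0 gp Lt Ls hts) meet
  (at_p _ _ fib1) (at_p _ _ fib2) (arm_coh _ _ coh1) (arm_coh _ _ coh2).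
by exists l; split=> //; exact: lp.
Qed.

Lemma hook_cofunctionals p (w : M p) (Y : {vspace M p}) : w \notin Y -> good_point p ->
  (forall s, survives_to f w s -> forall v, fm p s v = 0 -> v \in Y) ->
  exists cof : forall s, 'Hom(M s, F^o), [/\ cof p w = 1, forall v, v \in Y -> cof p v = 0 &
    forall t s, survives_to f w t -> survives_to f w s -> le t s ->
      forall v, cof s (fm t s v) = cof t v].
Proof.
move=> wY gp Y_ker.
have [phi0 [phi0w phi0Y]] := functional_on_complement wY.
pose C b s := on_arm b s && survives_to f w s.
have arm_cof b : exists phi : forall s, 'Hom(M s, F^o),
    (forall s, C b s -> forall v, phi s (fm p s v) = phi0 v) /\
    (forall t s, C b t -> C b s -> le t s -> forall v, phi s (fm t s v) = phi t v).
  apply: (chain_cofunctionals Qle_trans f_pmod).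
  - by move=> s /andP[_ /andP[]].
  - by move=> t s /andP[bt _] /andP[bs _]; exact: on_arm_cmp bt bs.
  - by move=> s /andP[_ Ss] v /(Y_ker s Ss) /phi0Y.
have w_neq0 : w != 0 by apply: contraNneq wY => ->; exact: mem0v.
have Sp : survives_to f w p := survives_to_p Qle_refl f_pmod w_neq0.
have at_p b (phi : forall s, 'Hom(M s, F^o)) :
    (forall s, C b s -> forall v, phi s (fm p s v) = phi0 v) -> on_arm b p -> phi p = phi0.
  by move=> fib bp; apply/lfunP => v; rewrite -{1}[v]fm_id fib // /C bp Sp.
have [phi1 [fib1 coh1]] := arm_cof true; have [phi2 [fib2 coh2]] := arm_cof false.
have meet s : survives_to f w s -> on_arm true s -> on_arm false s -> s = p.
  move=> Ss sa sf; have sc := on_arm_meet sa sf.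
  by rewrite sc (@survives_to_corner p w gp) // -sc.
have arm_coh b (phi : forall s, 'Hom(M s, F^o)) : (forall t s, C b t -> C b s -> le t s -> forall v, phi s (fm t s v) = phi t v) ->
    forall s t, survives_to f w s -> survives_to f w t -> le t s -> on_arm b s ->
    forall v, phi s (fm t s v) = phi t v.
  move=> coh s t Ss St hts bs; apply: coh => //; rewrite /C ?Ss ?St ?bs ?andbT //.
  exact: survives_on_arm gp Ss St hts bs.
have [phi [phip phicoh]] := @glue_families _ (fun s => 'Hom(M s, F^o)) (fun s t => le t s)
  (fun s t a b => forall v, a (fm t s v) = b v)
  (survives_to f w) (on_arm true) (on_arm false) p phi0 phi1 phi2
  (fun t _ => on_arm_cover t) (fun s t Ss St hts => survives_on_arm gp Ss St hts)
  (fun s t Ss St hts => survives_on_arm gp Ss St hts) meet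
  (at_p _ _ fib1) (at_p _ _ fib2) (arm_coh _ _ coh1) (arm_coh _ _ coh2).
exists phi; split=> [||t s St Ss hts]; rewrite ?phip //; exact: phicoh.
Qed.

Lemma hook_split p (v0 : M p) : v0 != 0 -> good_point p -> indecomposable f ->
  exists I, is_interval le I /\ pmod_iso f (kI_map F (le := le) I).
Proof.
move=> v0_neq0 gp M_indec.
have [PA [PK [chA chK imgs kers]]] := hook_space_chains p.
have [w [Y [w_neq0 wY wY_full Y_max]]] := good_vector v0_neq0 chA chK.
have Y_img t : le t p -> (forall v, fm t p v != w) -> forall v, fm t p v \in Y.
  move=> htp no_lift v; apply: (subvP (Y_max _ (imgs t htp) _)).
    by apply/memv_imgP => -[u _ uw]; move: (no_lift u); rewrite -uw eqxx.
  by apply: memv_img; exact: memvf.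
have Y_ker s : survives_to f w s -> forall v, fm p s v = 0 -> v \in Y.
  move=> /andP[hps w_alive] v v_ker; apply: (subvP (Y_max _ (kers s hps) _)); last by rewrite memv_ker v_ker.
  by rewrite memv_ker.
have [lift [lift_p lift_coh]] := hook_lifts w_neq0 gp.
have [cof [cof_w cof_Y cof_coh]] := hook_cofunctionals wY gp Y_ker.
have lifts_cmp t s := @hook_lifts_cmp p w t s w_neq0 gp.
have survives_cmp t s := @hook_survives_cmp p w t s gp.
exists (gen_support f w lift); split.
  exact: (@support_interval _ _ _ Qle_refl Qle_trans _ _ f_pmod _ _ w_neq0 _ lift_p lift_coh lifts_cmp).
exact: (@splitting_iso _ _ _ Qle_refl Qle_trans _ _ f_pmod _ _ _ w_neq0 wY wY_full Y_img
       _ lift_p lift_coh _ cof_w cof_Y cof_coh lifts_cmp survives_cmp M_indec).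
Qed.

Theorem hook_interval : indecomposable f ->
  exists I, is_interval le I /\ pmod_iso f (kI_map F (le := le) I).
Proof.
move=> M_indec; have [Mc0|Mc_neq0] := eqVneq (fullv : {vspace M corner}) 0%VS.
  have M0 (v : M corner) : v = 0 by apply/eqP; rewrite -memv0 -Mc0 memvf.
  have [[p [v0 v0_neq0]] _] := M_indec.
  by apply: (hook_split v0_neq0) => //; right.
have v0_neq0 : vpick (fullv : {vspace M corner}) != 0 by rewrite vpick0.
by apply: (hook_split v0_neq0) => //; left.
Qed.

End Hook.

Theorem lemma5p3 (F : fieldType) (dS dT : Order.disp_t)
  (S : orderType dS) (T : orderType dT) (x : S) (y : T) (dir : bool)
  (M : Qty dir x y -> vectType F)
  (f : forall p q, Qle dir x y p q -> 'Hom(M p, M q)) :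
  is_pmod f -> indecomposable f ->
  exists I : pred (Qty dir x y),
    is_interval (Qle dir x y) I /\ pmod_iso f (kI_map F (le := Qle dir x y) I).
Proof. by move=> f_pmod M_indec; exact: hook_interval f_pmod M_indec. Qed.
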